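(* Let $\mathcal{X}\subseteq\mathbb{R}^d$ be closed and convex and $f:\mathcal{X}\to\mathbb{R}$ convex and continuously differentiable. Let $\alpha,\beta:\mathbb{R}\to\mathbb{R}$ be smooth with $0<\dot\beta_t\le e^{\alpha_t}$ for all $t$. Suppose $t\mapsto X_t\in\mathcal{X}$ is differentiable and $Z_t:=X_t+\dot\beta_t^{-1}\dot X_t$ satisfies $\langle\nabla f(X_t),x-Z_t\rangle\ge0$ for all $x\in\mathcal{X}$ and all $t$. Then for every $x\in\mathcal{X}$, the function $\mathcal{E}_t=e^{\beta_t}\big(f(X_t)-f(x)\big)$ is nonincreasing in $t$; in particular, if $x^\ast$ minimizes $f$ over $\mathcal{X}$, then $f(X_t)-f(x^\ast)\le e^{\beta_0-\beta_t}\big(f(X_0)-f(x^\ast)\big)$ for $t\ge0$. *)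

From HB Require Import structures.
From mathcomp Require Import all_boot all_order all_algebra.
From mathcomp Require Import all_classical all_reals all_analysis.
Set Implicit Arguments. Unset Strict Implicit. Unset Printing Implicit Defensive.
Import Order.TTheory GRing.Theory Num.Theory.
Import numFieldNormedType.Exports.
Local Open Scope classical_set_scope.
Local Open Scope ring_scope.

Definition dotv (R : realType) (d : nat) (u v : 'rV[R]_d) : R :=
  \sum_(i < d) u ord0 i * v ord0 i.

Definition grad (R : realType) (d : nat) (f : 'rV[R]_d -> R) (x : 'rV[R]_d)
  : 'rV[R]_d := \row_(i < d) ('D_(delta_mx ord0 i) f x).

Definition convex_fun_on (R : realType) (d : nat) (X : set 'rV[R]_d)
  (f : 'rV[R]_d -> R) : Prop :=
  forall x y, X x -> X y -> forall l : R, 0 <= l -> l <= 1 ->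
    f (l *: x + (1 - l) *: y) <= l * f x + (1 - l) * f y.

Definition smooth_fun (R : realType) (g : R -> R) : Prop :=
  forall (n : nat) (t : R), derivable (derive1n n g) t 1.

From HB Require Import structures.
From mathcomp Require Import all_boot all_order all_algebra.
From mathcomp Require Import all_classical all_reals all_analysis.
From mathcomp Require Import lra.
Import Order.TTheory GRing.Theory Num.Theory.
Import numFieldNormedType.Exports.
Local Open Scope classical_set_scope.
Local Open Scope ring_scope.

(* Writing [y = X_t], [v = X_t'] and [b = beta_t' > 0], the
   hypothesis on [Z_t] at the point [x] gives [<grad f y, v> <= b <grad f y, x - y>],
   and convexity bounds [<grad f y, x - y>] by [f x - f y].  Hence
   [h t := f (X_t) - f x] satisfies [h' + beta' h <= 0], which is exactly
   [(e^beta h)' <= 0].  The rate follows by taking [s = 0] and [x = x*]. *)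

Section InnerProduct.
Context {R : realType} {d : nat}.

Lemma dotvD (g u v : 'rV[R]_d) : dotv g (u + v) = dotv g u + dotv g v.
Proof. by rewrite /dotv -big_split; apply: eq_bigr => i _; rewrite mxE mulrDr. Qed.

Lemma dotvN (g u : 'rV[R]_d) : dotv g (- u) = - dotv g u.
Proof. by rewrite /dotv -sumrN; apply: eq_bigr => i _; rewrite mxE mulrN. Qed.

Lemma dotvZ (g u : 'rV[R]_d) (c : R) : dotv g (c *: u) = c * dotv g u.
Proof. by rewrite /dotv mulr_sumr; apply: eq_bigr => i _; rewrite mxE mulrCA. Qed.

Lemma dotv_le_shifted_target {g x y v : 'rV[R]_d} {b : R} : 0 < b ->
  0 <= dotv g (x - (y + b^-1 *: v)) -> dotv g v <= b * dotv g (x - y).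
Proof.
move=> b_gt0 shifted.
by rewrite opprD addrA dotvD dotvN dotvZ subr_ge0 ler_pdivrMl in shifted.
Qed.

End InnerProduct.

Section Gradient.
Context {R : realType} {d : nat}.
Implicit Types (f : 'rV[R]_d -> R) (x y v : 'rV[R]_d).

Lemma diff_dotv_grad f y v : differentiable f y -> 'd f y v = dotv (grad f y) v.
Proof.
move=> df; rewrite [in LHS](matrix_sum_delta v) big_ord1 linear_sum /dotv.
by apply: eq_bigr => i _; rewrite linearZ /= /grad mxE (deriveE _ df) mulrC.
Qed.

Lemma is_derive_comp_grad {f} {c : R -> 'rV[R]_d} {t : R} :
  differentiable f (c t) -> derivable c t 1 ->
  is_derive t 1 (f \o c) (dotv (grad f (c t)) (derive1 c t)).
Proof.
move=> df dc; have /derivable1_diffP dc' := dc.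
have dfc : differentiable (f \o c) t by exact: differentiable_comp.
have -> : dotv (grad f (c t)) (derive1 c t) = 'D_1 (f \o c) t.
  by rewrite (deriveE _ dfc) diff_comp //= (derive1E' dc') diff_dotv_grad.
by apply: derivableP; exact/derivable1_diffP.
Qed.

Lemma convex_fun_on_derive_le (X : set 'rV[R]_d) f x y :
  convex_fun_on X f -> X x -> X y -> derivable f y (x - y) ->
  'D_(x - y) f y <= f x - f y.
Proof.
move=> cf Xx Xy dv.
rewrite /derive cvg_at_rightE; last exact: dv.
apply: limr_le.
  by apply/cvg_ex; exists ('D_(x - y) f y); apply: cvg_dnbhs_at_right.
near=> h.
have h_gt0 : 0 < h by near: h; exact: nbhs_right_gt.
have h_le1 : h <= 1 by near: h; exact: nbhs_right_le.
rewrite /= -ler_pdivlMl ?invr_gt0 // invrK.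
have -> : h *: (x - y) + y = h *: x + (1 - h) *: y.
  by rewrite scalerBr scalerBl scale1r -addrA [- _ + y]addrC.
have := cf x y Xx Xy h (ltW h_gt0) h_le1.
rewrite mulrBl mul1r mulrBr; lra.
Unshelve. all: by end_near.
Qed.

Lemma convex_fun_on_grad_le {X : set 'rV[R]_d} {f x y} :
  convex_fun_on X f -> X x -> X y -> differentiable f y ->
  dotv (grad f y) (x - y) <= f x - f y.
Proof.
move=> cf Xx Xy df; rewrite -diff_dotv_grad // -deriveE //.
by apply: convex_fun_on_derive_le cf Xx Xy _; exact: diff_derivable.
Qed.

End Gradient.

Lemma expR_mul_nonincreasing (R : realType) (beta h : R -> R) :
  (forall t, derivable beta t 1) -> (forall t, derivable h t 1) ->
  (forall t, derive1 h t + derive1 beta t * h t <= 0) ->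
  forall s t, s <= t -> expR (beta t) * h t <= expR (beta s) * h s.
Proof.
move=> db dh dissip s t st.
pose E := (expR \o beta) * h.
have dE (z : R) : is_derive z 1 E
    (expR (beta z) * (derive1 h z + derive1 beta z * h z)).
  have hb : is_derive z 1 beta (derive1 beta z) by rewrite derive1E; exact: derivableP.
  have hh : is_derive z 1 h (derive1 h z) by rewrite derive1E; exact: derivableP.
  have he : is_derive z 1 (expR \o beta) (expR (beta z) * derive1 beta z).
    exact: is_derive1_comp.
  apply: is_derive_eq.
  by rewrite /= /GRing.scale /= mulrDr mulrCA [h z * _]mulrC.
have E_nonincreasing : {in `[s, t] &, {homo E : u v /~ u <= v}}.
  apply: ler0_derive1_le_cc => [z _|z _|].
  - by case: (dE z).
  - by rewrite derive1E derive_val pmulr_rle0 ?expR_gt0.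
  - by apply: derivable_within_continuous => z _; case: (dE z).
by apply: E_nonincreasing; rewrite ?in_itv /= ?lexx ?st.
Qed.

Theorem proposition9 (R : realType) (d : nat) (X : set 'rV[R]_d)
  (f : 'rV[R]_d -> R) (alpha beta : R -> R) (Xt : R -> 'rV[R]_d)
  (hXclosed : closed X) (hXconv : convex.convex_set X)
  (hfconv : convex_fun_on X f)
  (hfdiff : forall x, X x -> differentiable f x)
  (hfC1 : {within X, continuous (grad f)})
  (halpha : smooth_fun alpha) (hbeta : smooth_fun beta)
  (hbeta_pos : forall t, 0 < derive1 beta t)
  (hbeta_le : forall t, derive1 beta t <= expR (alpha t))
  (hXin : forall t, X (Xt t))
  (hXdiff : forall t, derivable Xt t 1)
  (hZ : forall t x, X x ->
     0 <= dotv (grad f (Xt t))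
                (x - (Xt t + (derive1 beta t)^-1 *: derive1 Xt t))) :
  (forall x, X x ->
     forall s t, s <= t ->
       expR (beta t) * (f (Xt t) - f x) <= expR (beta s) * (f (Xt s) - f x))
  /\
  (forall xstar, X xstar -> (forall x, X x -> f xstar <= f x) ->
     forall t, 0 <= t ->
       f (Xt t) - f xstar <= expR (beta 0 - beta t) * (f (Xt 0) - f xstar)).
Proof.
have energy_nonincreasing x : X x -> forall s t, s <= t ->
    expR (beta t) * (f (Xt t) - f x) <= expR (beta s) * (f (Xt s) - f x).
  move=> Xx; pose gap := f \o Xt - cst (f x).
  have dgap (t : R) : is_derive t 1 gap
      (dotv (grad f (Xt t)) (derive1 Xt t) - 0).
    exact: is_deriveB (is_derive_comp_grad (hfdiff _ (hXin t)) (hXdiff t))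
      (is_derive_cst (f x) t 1).
  apply: (@expR_mul_nonincreasing _ beta gap) => [t|t|t].
  - exact: hbeta 0%N t.
  - by case: (dgap t).
  - rewrite derive1E derive_val subr0 /gap !fctE.
    have velocity := dotv_le_shifted_target (hbeta_pos t) (hZ t x Xx).
    have convexity := convex_fun_on_grad_le hfconv Xx (hXin t) (hfdiff _ (hXin t)).
    have := ler_wpM2l (ltW (hbeta_pos t)) convexity; lra.
split=> // xs Xs _ t t_ge0.
have := energy_nonincreasing xs Xs 0 t t_ge0.
by rewrite expRD expRN mulrAC ler_pdivlMr ?expR_gt0 // mulrC.
Qed.
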